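(* Let $a,b\in GF(q)\setminus\{0\}$ and let $\mu\in GF(q)$ satisfy $\mu^2=\frac ba\neq1$. For every point $P\in\mathcal B_a$ there are exactly two circles $g,h\in\tau(a,b)$ that are tangential to $\mathcal B_a$ in $P$. Moreover, $g$ is tangential to $\mathcal B_b$ in $\mu P$ and $h$ is tangential to $\mathcal B_b$ in $-\mu P$.
   Context: Let $p$ be an odd prime, $m\ge1$, and $q=p^m$. $GF(q^2)$ denotes the quadratic extension of $GF(q)$, and for $z\in GF(q^2)$ we write $\bar z:=z^{q}$. The Miquelian Möbius plane $\mathbb M(q)$ has point set $GF(q^2)\cup\{\infty\}$ and circles of two types: for $s\in GF(q^2)$ and $c\in GF(q)\setminus\{0\}$, the circle of the first type $\mathcal B^1_{(s,c)}=\{z\in GF(q^2):(z-s)(\bar z-\bar s)=c\}$; for $s\in GF(q^2)\setminus\{0\}$ and $c\in GF(q)$, the circle of the second type $\mathcal B^2_{(s,c)}=\{z\in GF(q^2):\bar s z+s\bar z=c\}\cup\{\infty\}$. Two circles are called tangential if they have exactly one point in common; a circle $g$ is tangential to a circle $\mathcal B$ in $P$ if $g\cap\mathcal B=\{P\}$. For $a\in GF(q)\setminus\{0\}$ put $\mathcal B_a:=\mathcal B^1_{(0,a)}$, and for $a,b\in GF(q)\setminus\{0\}$ let $\tau(a,b)$ be the set of circles tangential to both $\mathcal B_a$ and $\mathcal B_b$. *)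

(* GF(q^2) is modelled as an arbitrary finite field L with
   #|L| = q^2, q = p^m; conjugation is z |-> z^q and GF(q) is its fixed field. *)
From HB Require Import structures.
From mathcomp Require Import all_boot all_order all_algebra all_field.
Set Implicit Arguments. Unset Strict Implicit. Unset Printing Implicit Defensive.
Import GRing.Theory.
Local Open Scope ring_scope.

Section Moebius.
Variable (L : finFieldType) (q : nat).

Definition conjq (z : L) : L := z ^+ q.

Definition inGFq (x : L) : bool := x ^+ q == x.

(* points of M(q): Some z for z in GF(q^2), None for infinity *)
Definition circle1 (s c : L) : {set option L} :=
  [set x | if x is Some z then (z - s) * conjq (z - s) == c else false].

Definition circle2 (s c : L) : {set option L} :=
  [set x | if x is Some z then conjq s * z + s * conjq z == c else true].

Definition is_circle (C : {set option L}) : Prop :=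
  (exists s c, [/\ inGFq c, c != 0 & C = circle1 s c]) \/
  (exists s c, [/\ s != 0, inGFq c & C = circle2 s c]).

Definition tangential_in (g B : {set option L}) (P : option L) : Prop :=
  g :&: B = [set P].

Definition tangential (g B : {set option L}) : Prop :=
  exists P, tangential_in g B P.

Definition Bc (a : L) : {set option L} := circle1 0 a.

Definition in_tau (a b : L) (g : {set option L}) : Prop :=
  [/\ is_circle g, tangential g (Bc a) & tangential g (Bc b)].

Definition scalept (mu : L) (P : option L) : option L := omap (fun z => mu * z) P.

End Moebius.

From HB Require Import structures.
From mathcomp Require Import all_boot all_order all_algebra all_field.
From mathcomp Require Import ring.
Import GRing.Theory.
Local Open Scope ring_scope.

(* Reflections in lines through 0 preserve every circle B_c.  A circle with
   centre s, or a line with normal s, is also preserved by the reflection in the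
   line through 0 and s, so the unique points where it touches B_a and B_b lie on
   that line: s = t P with t in GF(q), and the point on B_b is mu P or -mu P.
   A line through P and +-mu P would force mu = +-1, while a circle centred at t P
   through P and +-mu P forces t = (1 +- mu) / 2; conversely both of these circles
   are tangent to B_a at P and to B_b at +-mu P. *)

Lemma tangential_inP {L : finFieldType} (k B : {set option L}) P :
  tangential_in k B P <->
  [/\ P \in k, P \in B & forall x, x \in k -> x \in B -> x = P].
Proof.
split=> [kB | [Pk PB uniq]].
  have : P \in k :&: B by rewrite kB set11.
  rewrite inE => /andP[Pk PB]; split=> // x xk xB.
  by apply/set1P; rewrite -kB inE xk.
apply/setP=> x; rewrite inE in_set1.
by apply/andP/eqP=> [[xk xB] | ->]; [exact: uniq | ].
Qed.

Lemma tangential_in_fixed {L : finFieldType} (k B : {set option L}) P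
    (f : option L -> option L) :
  {homo f : x / x \in k} -> {homo f : x / x \in B} ->
  tangential_in k B P -> f P = P.
Proof. by move=> fk fB /tangential_inP[Pk PB uniq]; apply: uniq; auto. Qed.

Lemma eq_double_root (F : fieldType) (w w' d : F) :
  w + w' = d + d -> w * w' = d * d -> w = d.
Proof.
move=> sum prod; apply/eqP; rewrite -subr_eq0 -sqrf_eq0.
have -> : (w - d) ^+ 2 = w * w - (d + d) * w + d * d by ring.
by rewrite -sum -prod; apply/eqP; ring.
Qed.

Lemma eq_midpoint (F : fieldType) (k t : F) :
  (2 : F) != 0 -> k != 1 -> (k - t) ^+ 2 = (1 - t) ^+ 2 -> t = (1 + k) / 2.
Proof.
move=> two_neq0 k_neq1 dist.
have : (k - 1) * (k + 1 - 2 * t) = 0.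
  transitivity ((k - t) ^+ 2 - (1 - t) ^+ 2); first by ring.
  by rewrite dist subrr.
move/eqP; rewrite mulf_eq0 subr_eq0 (negbTE k_neq1) /= subr_eq0 => /eqP kt.
by apply: (mulfI two_neq0); rewrite [2 * (_ / _)]mulrC divfK // addrC kt.
Qed.

Section Tangency.

Variables (L : finFieldType) (q : nat).
Hypothesis conjqD : {morph conjq q : x y / x + y : L}.
Hypothesis conjqK : involutive (@conjq L q).
Hypothesis two_neq0 : (2 : L) != 0.

Local Notation cj := (@conjq L q).

Lemma inGFqP x : reflect (cj x = x) (inGFq q x).
Proof. exact: eqP. Qed.

Lemma conjqM : {morph cj : x y / x * y}.
Proof. exact: exprMn. Qed.

Lemma conjqX n : {morph cj : x / x ^+ n}.
Proof. by move=> x; rewrite /conjq exprAC. Qed.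

Lemma conjq1 : cj 1 = 1.
Proof. exact: expr1n. Qed.

Lemma conjq0 : cj 0 = 0.
Proof. by apply: (addrI (cj 0)); rewrite -conjqD !addr0. Qed.

Lemma conjqN : {morph cj : x / - x}.
Proof. by move=> x; apply: (addrI (cj x)); rewrite -conjqD !subrr conjq0. Qed.

Lemma conjqB : {morph cj : x y / x - y}.
Proof. by move=> x y; rewrite conjqD conjqN. Qed.

Lemma conjq2 : cj 2 = 2.
Proof. by rewrite -[2 : L]/(1 *+ 2) mulr2n conjqD conjq1. Qed.

Lemma conjq_div : {morph cj : x y / x / y}.
Proof. by move=> x y; rewrite conjqM /conjq exprVn. Qed.

Lemma conjq_eq0 x : (cj x == 0) = (x == 0).
Proof. by apply/eqP/eqP=> [x0 | ->]; [rewrite -[x]conjqK x0 |]; rewrite conjq0. Qed.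

Lemma conjq_norm z : cj (z * cj z) = z * cj z.
Proof. by rewrite conjqM conjqK mulrC. Qed.

Lemma norm_neq0 {z : L} : z != 0 -> z * cj z != 0.
Proof. by move=> z0; rewrite mulf_neq0 ?conjq_eq0. Qed.

Lemma eq_oppr_self (x : L) : (- x == x) = (x == 0).
Proof.
by rewrite eq_sym -addr_eq0 -mulr2n -mulr_natl mulf_eq0 (negbTE two_neq0).
Qed.

Lemma mem_circle1 s c z :
  (Some z \in circle1 q s c) = ((z - s) * cj (z - s) == c).
Proof. by rewrite inE. Qed.

Lemma mem_circle2 s c z :
  (Some z \in circle2 q s c) = (cj s * z + s * cj z == c).
Proof. by rewrite inE. Qed.

Lemma mem_Bc e z : (Some z \in Bc q e) = (z * cj z == e).
Proof. by rewrite inE subr0. Qed.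

(* The reflection in the line through 0 and s. *)
Definition mirror (s z : L) : L := s * cj z / cj s.

Lemma conjq_mirror s z : cj (mirror s z) = cj s * z / s.
Proof. by rewrite conjq_div conjqM !conjqK. Qed.

Lemma mirror_Bc s e z : s != 0 ->
  (Some (mirror s z) \in Bc q e) = (Some z \in Bc q e).
Proof.
move=> s0; rewrite !mem_Bc conjq_mirror /mirror; congr (_ == e).
by field; rewrite conjq_eq0 s0.
Qed.

Lemma mirror_circle1 {s c : L} : s != 0 ->
  forall z, (Some (mirror s z) \in circle1 q s c) = (Some z \in circle1 q s c).
Proof.
move=> s0 z; rewrite !mem_circle1 !conjqB conjq_mirror /mirror; congr (_ == c).
by field; rewrite conjq_eq0 s0.
Qed.

Lemma mirror_circle2 {s c : L} : s != 0 ->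
  forall z, (Some (mirror s z) \in circle2 q s c) = (Some z \in circle2 q s c).
Proof.
move=> s0 z; rewrite !mem_circle2 conjq_mirror /mirror; congr (_ == c).
by field; rewrite conjq_eq0 s0.
Qed.

(* B_e is mirror-symmetric too, so the unique common point is fixed. *)
Lemma tangent_on_axis {k : {set option L}} {e s z : L} : s != 0 ->
  (forall w, (Some (mirror s w) \in k) = (Some w \in k)) ->
  tangential_in k (Bc q e) (Some z) -> s * cj z = z * cj s.
Proof.
move=> s0 ks kz.
have [] : omap (mirror s) (Some z) = Some z.
  by apply: tangential_in_fixed kz; case=> //= w; rewrite ?ks ?mirror_Bc.
by move=> fixed; rewrite -{2}fixed /mirror divfK // conjq_eq0.
Qed.

Lemma axis_real_multiple {z0 s : L} : z0 != 0 ->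
  s * cj z0 = z0 * cj s -> exists2 t, cj t = t & s = t * z0.
Proof.
move=> z00 axis; exists (s * cj z0 / (z0 * cj z0)).
  by rewrite conjq_div conjq_norm conjqM conjqK [cj s * _]mulrC -axis.
by field; rewrite conjq_eq0 z00.
Qed.

Lemma axis_Bc_points {z0 z mu : L} : z0 != 0 ->
  z * cj z = mu ^+ 2 * (z0 * cj z0) -> z0 * cj z = z * cj z0 ->
  z = mu * z0 \/ z = - mu * z0.
Proof.
move=> z00 zB axis; have cz00 : cj z0 != 0 by rewrite conjq_eq0.
have : (z * cj z0) ^+ 2 = (mu * (z0 * cj z0)) ^+ 2.
  transitivity ((z * cj z) * (z0 * cj z0)); last by rewrite zB; ring.
  by rewrite expr2 -{2}axis; ring.
move/eqP; rewrite eqf_sqr => /orP[] /eqP w_eq; [left | right].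
  by apply: (mulIf cz00); rewrite w_eq; ring.
by apply: (mulIf cz00); rewrite w_eq; ring.
Qed.

Lemma tangent_circle_axis {k : {set option L}} {s z0 mu : L} :
  z0 != 0 -> s != 0 ->
  (forall w, (Some (mirror s w) \in k) = (Some w \in k)) ->
  tangential_in k (Bc q (z0 * cj z0)) (Some z0) ->
  tangential k (Bc q (mu ^+ 2 * (z0 * cj z0))) ->
  exists2 t, cj t = t & s = t * z0 /\ (Some (mu * z0) \in k \/ Some (- mu * z0) \in k).
Proof.
move=> z00 s0 ks tanA [[z|] tanB]; have /tangential_inP[zk zB _] := tanB; last first.
  by rewrite inE in zB.
have [t ht st] := axis_real_multiple z00 (tangent_on_axis s0 ks tanA).
have t0 : t != 0 by apply: contraNneq s0 => t0; rewrite st t0 mul0r.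
exists t => //; split => //.
have axis : z0 * cj z = z * cj z0.
  apply: (mulfI t0); rewrite mulrA -st (tangent_on_axis s0 ks tanB) st conjqM ht.
  by ring.
rewrite mem_Bc in zB.
by case: (axis_Bc_points z00 (eqP zB) axis) => <-; [left | right].
Qed.

(* The circle through z0 centred at t * z0. *)
Definition centred_circle (z0 t : L) : {set option L} :=
  circle1 q (t * z0) ((1 - t) ^+ 2 * (z0 * cj z0)).

Lemma mem_circle1_axis (z0 t c k : L) : cj t = t -> cj k = k ->
  (Some (k * z0) \in circle1 q (t * z0) c) = ((k - t) ^+ 2 * (z0 * cj z0) == c).
Proof.
by move=> ht hk; rewrite mem_circle1 -mulrBl conjqM conjqB ht hk; congr (_ == c); ring.
Qed.

Lemma mem_circle2_axis (z0 t c k : L) : cj t = t -> cj k = k ->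
  (Some (k * z0) \in circle2 q (t * z0) c) = (2 * k * t * (z0 * cj z0) == c).
Proof. by move=> ht hk; rewrite mem_circle2 !conjqM ht hk; congr (_ == c); ring. Qed.

Lemma mem_Bc_axis (z0 e k : L) : cj k = k ->
  (Some (k * z0) \in Bc q e) = (k ^+ 2 * (z0 * cj z0) == e).
Proof. by move=> hk; rewrite mem_Bc conjqM hk; congr (_ == e); ring. Qed.

Lemma centred_circle_tangent {z0 t k : L} :
  z0 != 0 -> cj t = t -> cj k = k -> t != 0 -> (k - t) ^+ 2 = (1 - t) ^+ 2 ->
  tangential_in (centred_circle z0 t) (Bc q (k ^+ 2 * (z0 * cj z0))) (Some (k * z0)).
Proof.
move=> z00 ht hk t0 dist; apply/tangential_inP; split.
- by rewrite mem_circle1_axis // dist.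
- by rewrite mem_Bc_axis.
case=> [z|]; last by rewrite inE.
rewrite mem_circle1 mem_Bc conjqB conjqM ht => /eqP onC /eqP onB; congr Some.
have sum : t * (z * cj z0 + cj z * z0) = t * (k * (z0 * cj z0) + k * (z0 * cj z0)).
  transitivity (z * cj z + t ^+ 2 * (z0 * cj z0) - (z - t * z0) * (cj z - t * cj z0)).
    by ring.
  by rewrite onC onB -dist; ring.
have w_eq : z * cj z0 = k * (z0 * cj z0).
  apply: (@eq_double_root _ _ (cj z * z0)); first by apply: (mulfI t0); rewrite sum.
  by transitivity ((z * cj z) * (z0 * cj z0)); [ring | rewrite onB; ring].
have cz00 : cj z0 != 0 by rewrite conjq_eq0.
by apply: (mulIf cz00); rewrite w_eq; ring.
Qed.

Lemma is_circle_centred (z0 t : L) : z0 != 0 -> cj t = t -> t != 1 ->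
  is_circle q (centred_circle z0 t).
Proof.
move=> z00 ht t1; left; exists (t * z0), ((1 - t) ^+ 2 * (z0 * cj z0)); split => //.
  by apply/inGFqP; rewrite conjqM conjqX conjqB conjq1 ht conjq_norm.
by rewrite mulf_neq0 ?norm_neq0 // expf_neq0 // subr_eq0 eq_sym.
Qed.

Lemma centred_circle_centre {z0 t k : L} :
  z0 != 0 -> cj t = t -> cj k = k -> k != 1 ->
  Some (k * z0) \in centred_circle z0 t -> t = (1 + k) / 2.
Proof.
move=> z00 ht hk k1; rewrite mem_circle1_axis // => /eqP /(mulIf (norm_neq0 z00)).
exact: eq_midpoint.
Qed.

Lemma circle1_centre0_not_tangent (c e z0 : L) : z0 != 0 ->
  ~ tangential_in (circle1 q 0 c) (Bc q e) (Some z0).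
Proof.
move=> z00 tan; have [] : omap (fun z => - z) (Some z0) = Some z0.
  by apply: tangential_in_fixed tan; case=> //= z;
    rewrite ?mem_Bc ?mem_circle1 ?subr0 conjqN mulrNN.
by move/eqP; rewrite eq_oppr_self (negbTE z00).
Qed.

Lemma centred_midpoint_tangent {z0 eps : L} :
  z0 != 0 -> cj eps = eps -> eps != 1 -> eps != -1 ->
  [/\ is_circle q (centred_circle z0 ((1 + eps) / 2)),
      tangential_in (centred_circle z0 ((1 + eps) / 2)) (Bc q (z0 * cj z0)) (Some z0)
    & tangential_in (centred_circle z0 ((1 + eps) / 2))
        (Bc q (eps ^+ 2 * (z0 * cj z0))) (Some (eps * z0))].
Proof.
move=> z00 he e1 em1; set t := (1 + eps) / 2.
have ht : cj t = t by rewrite conjq_div conjqD conjq1 he conjq2.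
have t0 : t != 0 by rewrite mulf_neq0 ?invr_neq0 // addrC addr_eq0.
have dist : (eps - t) ^+ 2 = (1 - t) ^+ 2 by rewrite /t; field.
split.
- apply: is_circle_centred => //; apply: contraNneq e1 => t1.
  by move: dist; rewrite t1 subrr => /eqP; rewrite eqf_sqr oppr0 orbb subr_eq0.
- by have := centred_circle_tangent z00 ht conjq1 t0 erefl; rewrite expr1n !mul1r.
- exact: centred_circle_tangent z00 ht he t0 dist.
Qed.

Section TwoCircles.

Variables (z0 mu : L).
Hypotheses (z00 : z0 != 0) (hmu : cj mu = mu) (mu1 : mu != 1) (mu1' : - mu != 1).

Local Notation N0 := (z0 * cj z0).

Fact conjq_oppmu : cj (- mu) = - mu.
Proof. by rewrite conjqN hmu. Qed.

Lemma tangent_circle1 (s c : L) :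
  tangential_in (circle1 q s c) (Bc q N0) (Some z0) ->
  tangential (circle1 q s c) (Bc q (mu ^+ 2 * N0)) ->
  circle1 q s c = centred_circle z0 ((1 + mu) / 2) \/
  circle1 q s c = centred_circle z0 ((1 - mu) / 2).
Proof.
move=> tanA tanB; have s0 : s != 0.
  by apply/eqP=> s0; move: tanA; rewrite s0; exact: circle1_centre0_not_tangent.
have [t ht [st onB]] := tangent_circle_axis z00 s0 (mirror_circle1 s0) tanA tanB.
subst s.
have /tangential_inP[+ _ _] := tanA.
rewrite -{1}[z0]mul1r mem_circle1_axis ?conjq1 // => /eqP c_eq; subst c.
case: onB => onB; [left | right].
  by rewrite (centred_circle_centre z00 ht hmu mu1 onB).
by rewrite (centred_circle_centre z00 ht conjq_oppmu mu1' onB).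
Qed.

Lemma circle2_not_tangent (s c : L) : s != 0 ->
  tangential_in (circle2 q s c) (Bc q N0) (Some z0) ->
  ~ tangential (circle2 q s c) (Bc q (mu ^+ 2 * N0)).
Proof.
move=> s0 tanA tanB.
have [t ht [st onB]] := tangent_circle_axis z00 s0 (mirror_circle2 s0) tanA tanB.
subst s; have t0 : t != 0 by apply: contraNneq s0 => ->; rewrite mul0r.
have /tangential_inP[+ _ _] := tanA.
rewrite -{1}[z0]mul1r mem_circle2_axis ?conjq1 // => /eqP c_eq; subst c.
have on_circle_eq1 eps : cj eps = eps ->
    Some (eps * z0) \in circle2 q (t * z0) (2 * 1 * t * N0) -> eps = 1.
  move=> he; rewrite mem_circle2_axis // => /eqP.
  by move=> /(mulIf (norm_neq0 z00)) /(mulIf t0) /(mulfI two_neq0).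
case: onB => onB; [move/eqP: mu1 | move/eqP: mu1']; apply.
  exact: on_circle_eq1 hmu onB.
exact: on_circle_eq1 conjq_oppmu onB.
Qed.

Lemma tangent_circle_classification (k : {set option L}) :
  is_circle q k -> tangential_in k (Bc q N0) (Some z0) ->
  tangential k (Bc q (mu ^+ 2 * N0)) ->
  k = centred_circle z0 ((1 + mu) / 2) \/ k = centred_circle z0 ((1 - mu) / 2).
Proof.
case=> [[s [c [_ _ ->]]] | [s [c [s0 _ ->]]]] tanA tanB.
  exact: tangent_circle1.
by case: (circle2_not_tangent _ _ s0 tanA tanB).
Qed.

End TwoCircles.

Theorem tangent_circles_through (a b mu : L) (ha0 : a != 0) (hb0 : b != 0)
  (hmu : inGFq q mu) (hmu2 : mu ^+ 2 = b / a) (hba : b / a != 1)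
  (P : option L) (hP : P \in Bc q a) :
  exists g h : {set option L},
    [/\ g != h,
        in_tau q a b g /\ in_tau q a b h,
        tangential_in g (Bc q a) P /\ tangential_in h (Bc q a) P,
        (forall k, in_tau q a b k -> tangential_in k (Bc q a) P -> k = g \/ k = h)
      & tangential_in g (Bc q b) (scalept mu P) /\
        tangential_in h (Bc q b) (scalept (- mu) P)].
Proof.
case: P hP => [z0|]; last by rewrite inE.
rewrite mem_Bc => /eqP a_eq.
have z00 : z0 != 0 by apply: contraNneq ha0 => z0_0; rewrite -a_eq z0_0 mul0r.
have mu0 : mu != 0.
  by apply: contraNneq hb0 => mu0; rewrite -(divfK ha0 b) -hmu2 mu0 expr2 !mul0r.
have /inGFqP cmu := hmu; have cmuN : cj (- mu) = - mu by rewrite conjqN cmu.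
rewrite -hmu2 in hba.
have mu1 : mu != 1 by apply: contraNneq hba => ->; rewrite expr1n.
have mu1' : - mu != 1 by apply: contraNneq hba => e; rewrite -sqrrN e expr1n.
have mum1 : mu != -1 by rewrite -eqr_oppLR.
have mumN1 : - mu != -1 by rewrite eqr_opp.
have [gc gA gB] := centred_midpoint_tangent z00 cmu mu1 mum1.
have [hc hA hB] := centred_midpoint_tangent z00 cmuN mu1' mumN1.
rewrite sqrrN in hB.
have -> : b = mu ^+ 2 * a by rewrite hmu2 divfK.
rewrite -a_eq /=.
exists (centred_circle z0 ((1 + mu) / 2)), (centred_circle z0 ((1 - mu) / 2)); split.
- apply/eqP => gh; move: hB; rewrite -gh /tangential_in gB => /set1_inj [] /eqP.
  by rewrite eq_sym mulNr eq_oppr_self mulf_eq0 (negbTE mu0) (negbTE z00).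
- by split; split=> //; [exists (Some z0) | exists (Some (mu * z0))
                        | exists (Some z0) | exists (Some (- mu * z0))].
- by [].
- by move=> k [kc _ kB] kA; exact: tangent_circle_classification.
- by [].
Qed.

End Tangency.

Lemma pchar_card_sqr {p m : nat} {L : finFieldType} :
  prime p -> #|L| = ((p ^ m) ^ 2)%N -> p \in [pchar L].
Proof. by move=> hp hL; apply: (card_finPcharP _ hp); rewrite hL -expnM. Qed.

Lemma conjqD_pchar {p m : nat} {L : finFieldType} :
  p \in [pchar L] -> {morph @conjq L (p ^ m) : x y / x + y}.
Proof.
move=> pL x y.
rewrite /conjq exprDn_pchar // (eq_pnat _ (pcharf_eq pL)) pnatX pnat_id //.
exact: pcharf_prime pL.
Qed.

Lemma conjqK_card {n : nat} {L : finFieldType} :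
  #|L| = (n ^ 2)%N -> involutive (@conjq L n).
Proof. by move=> hL x; rewrite /conjq -exprM mulnn -hL expf_card. Qed.

Lemma two_neq0_pchar {p : nat} {L : finFieldType} :
  prime p -> odd p -> p \in [pchar L] -> (2 : L) != 0.
Proof.
move=> hp hodd pL.
by rewrite -(dvdn_pcharf pL) dvdn_prime2 //; apply: contraTneq hodd => ->.
Qed.

Theorem mainTheorem5 (p m : nat) (L : finFieldType)
  (hp : prime p) (hodd : odd p) (hm : (0 < m)%N)
  (hL : #|L| = ((p ^ m) ^ 2)%N)
  (a b mu : L)
  (ha : inGFq (p ^ m) a) (ha0 : a != 0)
  (hb : inGFq (p ^ m) b) (hb0 : b != 0)
  (hmu : inGFq (p ^ m) mu) (hmu2 : mu ^+ 2 = b / a) (hba : b / a != 1)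
  (P : option L) (hP : P \in Bc (p ^ m) a) :
  exists g h : {set option L},
    [/\ g != h,
        in_tau (p ^ m) a b g /\ in_tau (p ^ m) a b h,
        tangential_in g (Bc (p ^ m) a) P /\ tangential_in h (Bc (p ^ m) a) P,
        (forall k, in_tau (p ^ m) a b k -> tangential_in k (Bc (p ^ m) a) P ->
                   k = g \/ k = h)
      & tangential_in g (Bc (p ^ m) b) (scalept mu P) /\
        tangential_in h (Bc (p ^ m) b) (scalept (- mu) P)].
Proof.
have pL := pchar_card_sqr hp hL.
apply: (@tangent_circles_through L (p ^ m)) => //.
- exact: conjqD_pchar.
- exact: conjqK_card.
- exact: two_neq0_pchar pL.
Qed.
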